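(* Let $\lambda$ be the real root and $\mu,\bar\mu$ the non-real roots of $t^3-t-2$. Then (i) $\mu^n\notin\mathbb R$ for every $n\ge1$; (ii) the set $\{\arg(\mu^n)\mid n\ge1\}$ is dense in $[0,2\pi]$. *)

From Stdlib Require Import Reals ClassicalEpsilon.
From Coquelicot Require Import Coquelicot.
Open Scope R_scope.

Definition is_arg (z : C) (theta : R) : Prop :=
  0 <= theta < 2 * PI /\
  Re z = Cmod z * cos theta /\ Im z = Cmod z * sin theta.

(* arg z : the argument of z in [0, 2*PI) (unique for z <> 0). *)
Definition arg (z : C) : R :=
  epsilon (inhabits 0) (fun theta => is_arg z theta).

From Stdlib Require Import Reals Lra Lia ZArith Classical ClassicalEpsilon.
From Coquelicot Require Import Coquelicot.
Open Scope R_scope.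

(* (i) Modulo t^3 - t - 2 every power t^n reduces to a t^2 + b t + c with
   integers a, b, c, so the same relation holds for mu and for the real root
   lambda = -2 Re mu.  If mu^n were real, its imaginary part
   Im mu (2 a Re mu + b) would force b = a lambda.  As lambda is irrational
   (descent modulo 3 on b^3 - a^2 b - 2 a^3 = 0), a = b = 0, so
   mu^n = c = lambda^n, impossible since |mu|^2 = lambda^2 - 1.
   (ii) Write mu = r e^(it).  By (i), alpha = t / 2 PI is irrational and
   arg (mu^n) = 2 PI frac (n alpha).  By the pigeonhole principle some d alpha
   lies within eps of an integer, and the multiples of d alpha then sweep
   [0, 1] modulo 1 with steps shorter than eps. *)

(* z^(n+1) = z (a z^2 + b z + c) = b z^2 + (a + c) z + 2 a once z^3 = z + 2. *)
Fixpoint cubic_pow_coeffs (n : nat) : Z * Z * Z :=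
  match n with
  | O => (0, 0, 1)%Z
  | S n => let '(a, b, c) := cubic_pow_coeffs n in (b, a + c, 2 * a)%Z
  end.

Lemma cubic_pow_coeffs_spec (z : C) (n : nat) : (z ^ 3 = z + 2)%C ->
  let '(a, b, c) := cubic_pow_coeffs n in (z ^ n = IZR a * z ^ 2 + IZR b * z + IZR c)%C.
Proof.
intros Hz. induction n as [|n IH]; cbn [cubic_pow_coeffs].
- apply injective_projections; simpl; ring.
- destruct (cubic_pow_coeffs n) as [[a b] c].
  cbn [Cpow]. rewrite IH, plus_IZR, mult_IZR, !RtoC_plus, !RtoC_mult.
  transitivity (IZR a * z ^ 3 + IZR b * z ^ 2 + IZR c * z)%C; [ring |].
  rewrite Hz. apply injective_projections; simpl; ring.
Qed.

Lemma cubic_form_div3 (a b : Z) :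
  (b * b * b - a * a * b - 2 * a * a * a = 0)%Z -> (3 | a)%Z /\ (3 | b)%Z.
Proof.
intros H. rewrite <- !Z.mod_divide by lia.
rewrite (Z.div_mod a 3), (Z.div_mod b 3) in H by lia.
pose proof (Z.mod_pos_bound a 3 ltac:(lia)). pose proof (Z.mod_pos_bound b 3 ltac:(lia)).
generalize dependent (a mod 3)%Z; generalize dependent (b mod 3)%Z.
intros s Hs r H Hr.
assert (r = 0 \/ r = 1 \/ r = 2)%Z as [-> | [-> | ->]] by lia;
assert (s = 0 \/ s = 1 \/ s = 2)%Z as [-> | [-> | ->]] by lia;
  ring_simplify in H; lia.
Qed.

Lemma cubic_form_eq0 (a b : Z) :
  (b * b * b - a * a * b - 2 * a * a * a = 0)%Z -> a = 0%Z.
Proof.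
remember (Z.abs_nat a) as n eqn:Hn. assert (Hle : (Z.abs_nat a <= n)%nat) by lia.
clear Hn. revert a b Hle. induction n as [|n IH]; intros a b Hle H; [lia |].
destruct (cubic_form_div3 a b H) as [[q ->] [p ->]].
assert (q = 0)%Z; [| lia].
apply (IH q p); [lia |]. ring_simplify in H. lia.
Qed.

Lemma nonreal_cubic_root_coords (x y : R) :
  ((x, y) ^ 3 - (x, y) - 2)%C = RtoC 0 -> y <> 0 ->
  y ^ 2 = 3 * x ^ 2 - 1 /\ (-2 * x) ^ 3 = -2 * x + 2.
Proof.
intros H Hy.
assert (Hre := f_equal fst H). assert (Him := f_equal snd H). simpl in Hre, Him.
assert (Hy2 : y ^ 2 = 3 * x ^ 2 - 1).
{ assert (Hfac : y * (3 * x ^ 2 - y ^ 2 - 1) = 0) by lra.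
  apply Rmult_integral in Hfac as [| Hfac]; [contradiction | lra]. }
split; [exact Hy2 |].
assert (y ^ 2 * x = (3 * x ^ 2 - 1) * x) by now rewrite Hy2. nra.
Qed.

Lemma nonreal_cubic_root_real_pow (x y : R) (n : nat) :
  ((x, y) ^ 3 - (x, y) - 2)%C = RtoC 0 -> y <> 0 -> Im ((x, y) ^ n)%C = 0 ->
  ((x, y) ^ n)%C = RtoC ((-2 * x) ^ n).
Proof.
intros H Hy Him.
destruct (nonreal_cubic_root_coords x y H Hy) as [Hy2 Hl].
set (l := -2 * x) in *.
assert (Hmu : ((x, y) ^ 3 = (x, y) + 2)%C).
{ transitivity (((x, y) ^ 3 - (x, y) - 2) + (x, y) + 2)%C; [ring |]. rewrite H. ring. }
assert (Hl' : (RtoC l ^ 3 = RtoC l + 2)%C) by (rewrite <- RtoC_pow, Hl, RtoC_plus; reflexivity).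
pose proof (cubic_pow_coeffs_spec _ n Hmu) as Emu.
pose proof (cubic_pow_coeffs_spec _ n Hl') as El.
destruct (cubic_pow_coeffs n) as [[a b] c].
rewrite Emu in Him |- *. rewrite RtoC_pow, El.
assert (Hb : IZR b = IZR a * l).
{ simpl in Him. unfold l.
  assert (Hfac : y * (2 * IZR a * x + IZR b) = 0) by lra.
  apply Rmult_integral in Hfac as [| Hfac]; [contradiction | lra]. }
assert (Ha : a = 0%Z).
{ apply (cubic_form_eq0 a b), eq_IZR. rewrite !minus_IZR, !mult_IZR, Hb.
  transitivity (IZR a * IZR a * IZR a * (l ^ 3 - l - 2)); [simpl; ring |].
  rewrite Hl. simpl. ring. }
subst a. rewrite Rmult_0_l in Hb. rewrite Hb.
apply injective_projections; simpl; ring.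
Qed.

Lemma pow_lt_compat_l (a b : R) (n : nat) : 0 <= a < b -> (1 <= n)%nat -> a ^ n < b ^ n.
Proof.
intros [Ha Hab] Hn. induction n as [|n IH]; [lia |].
destruct n as [|n]; [simpl; lra |].
assert (a ^ S n < b ^ S n) by (apply IH; lia).
assert (0 <= a ^ S n) by (apply pow_le; lra).
change (a * a ^ S n < b * b ^ S n). nra.
Qed.

Lemma cubic_root_pow_not_real (mu : C) :
  (mu ^ 3 - mu - 2)%C = RtoC 0 -> Im mu <> 0 ->
  forall n : nat, (1 <= n)%nat -> Im (mu ^ n)%C <> 0.
Proof.
intros H Hy n Hn Him. destruct mu as [x y]. simpl in Hy.
destruct (nonreal_cubic_root_coords x y H Hy) as [Hy2 _].
pose proof (f_equal Cmod (nonreal_cubic_root_real_pow x y n H Hy Him)) as Hmod.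
rewrite Cmod_pow, Cmod_R, <- RPow_abs in Hmod.
assert (Hlt : Cmod (x, y) < Rabs (-2 * x)).
{ unfold Cmod. simpl fst; simpl snd. rewrite <- sqrt_Rsqr_abs.
  apply sqrt_lt_1; unfold Rsqr; nra. }
pose proof (pow_lt_compat_l _ _ n (conj (Cmod_ge_0 _) Hlt) Hn). lra.
Qed.

Lemma cos_sin_2PI_mult (m : Z) : cos (2 * PI * IZR m) = 1 /\ sin (2 * PI * IZR m) = 0.
Proof.
assert (Hs : sin (PI * IZR m) = 0) by (apply sin_eq_0_1; exists m; ring).
replace (2 * PI * IZR m) with (2 * (PI * IZR m)) by ring.
rewrite cos_2a_sin, sin_2a, Hs. split; ring.
Qed.

Lemma cos_sin_add_2PI_mult (x : R) (m : Z) :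
  cos (x + 2 * PI * IZR m) = cos x /\ sin (x + 2 * PI * IZR m) = sin x.
Proof.
destruct (cos_sin_2PI_mult m) as [Hc Hs].
rewrite cos_plus, sin_plus, Hc, Hs. split; ring.
Qed.

Lemma cos_sin_inj_0_2PI (a b : R) : 0 <= a < 2 * PI -> 0 <= b < 2 * PI ->
  cos a = cos b -> sin a = sin b -> a = b.
Proof.
intros Ha Hb Hc Hs. pose proof PI_RGT_0.
assert (Hsin : sin (a - b) = 0) by (rewrite sin_minus, Hc, Hs; ring).
assert (Hcos : cos (a - b) = 1).
{ rewrite cos_minus, Hc, Hs. pose proof (sin2_cos2 b) as H1. unfold Rsqr in H1. lra. }
destruct (sin_eq_0_0 _ Hsin) as [k Hk].
assert (Hk2 : (-2 < k < 2)%Z) by (split; apply lt_IZR, Rmult_lt_reg_r with PI; lra).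
assert (k = -1 \/ k = 0 \/ k = 1)%Z as [-> | [-> | ->]] by lia; rewrite Hk in Hcos.
- replace (IZR (-1) * PI) with (- PI) in Hcos by ring.
  rewrite cos_neg, cos_PI in Hcos. lra.
- lra.
- rewrite Rmult_1_l, cos_PI in Hcos. lra.
Qed.

Lemma Cmod_polar (r t : R) : 0 <= r -> Cmod (r * cos t, r * sin t) = r.
Proof.
intros Hr. unfold Cmod; simpl fst; simpl snd.
replace ((r * cos t) ^ 2 + (r * sin t) ^ 2) with (r ^ 2 * ((sin t)² + (cos t)²))
  by (unfold Rsqr; ring).
rewrite sin2_cos2, Rmult_1_r. now apply sqrt_pow2.
Qed.

Lemma arg_polar (r theta : R) : 0 < r -> 0 <= theta < 2 * PI ->
  arg (r * cos theta, r * sin theta) = theta.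
Proof.
intros Hr Htheta. set (z := (r * cos theta, r * sin theta)).
assert (Harg : is_arg z theta) by (unfold is_arg, z; rewrite Cmod_polar by lra; auto).
pose proof (epsilon_spec (inhabits 0) (is_arg z) (ex_intro _ theta Harg)) as Hspec.
change (epsilon _ (is_arg z)) with (arg z) in Hspec.
destruct Hspec as [Hrange [Hre Him]].
unfold z in *. rewrite Cmod_polar in Hre, Him by lra. simpl in Hre, Him.
symmetry. apply cos_sin_inj_0_2PI; auto; apply Rmult_eq_reg_l with r; lra.
Qed.

Lemma polar_form (z : C) : z <> 0%C -> exists t, z = (Cmod z * cos t, Cmod z * sin t).
Proof.
intros Hz. apply Cmod_gt_0 in Hz.
destruct z as [x y]. set (r := Cmod (x, y)) in *.
assert (Hr2 : r ^ 2 = x ^ 2 + y ^ 2)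
  by (unfold r, Cmod; simpl fst; simpl snd; apply pow2_sqrt;
      pose proof (pow2_ge_0 x); pose proof (pow2_ge_0 y); lra).
set (c := x / r). assert (Hx : x = r * c) by (unfold c; field; lra).
assert (Hc2 : c * c <= 1).
{ apply (Rmult_le_reg_l (r * r)); [nra |].
  rewrite Hx in Hr2. pose proof (pow2_ge_0 y). nra. }
assert (Hc : -1 <= c <= 1) by (split; nra).
set (s := sin (acos c)).
assert (Hs0 : 0 <= s) by (unfold s; rewrite sin_acos by exact Hc; apply sqrt_pos).
assert (Hs2 : (r * s)² = y²).
{ pose proof (sin2_cos2 (acos c)) as H1. rewrite cos_acos in H1 by exact Hc.
  fold s in H1. unfold Rsqr in *. nra. }
destruct (Rle_or_lt 0 y) as [Hy | Hy].
- exists (acos c). rewrite cos_acos by exact Hc. fold s.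
  f_equal; [exact Hx |]. apply Rsqr_inj; [lra | nra | auto].
- exists (- acos c). rewrite cos_neg, sin_neg, cos_acos by exact Hc. fold s.
  f_equal; [exact Hx |].
  assert (- y = r * s) by (apply Rsqr_inj; [lra | nra | rewrite <- Rsqr_neg; auto]).
  lra.
Qed.

Lemma Cpow_polar (r t : R) (n : nat) :
  Cpow (r * cos t, r * sin t) n = (r ^ n * cos (INR n * t), r ^ n * sin (INR n * t)).
Proof.
induction n as [|n IH].
- simpl. rewrite Rmult_0_l, cos_0, sin_0. apply injective_projections; simpl; ring.
- cbn [Cpow]. rewrite IH, S_INR, Rmult_plus_distr_r, Rmult_1_l, cos_plus, sin_plus.
  apply injective_projections; simpl; ring.
Qed.

Lemma arg_Cpow_polar (r t : R) (n : nat) : 0 < r ->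
  arg (Cpow (r * cos t, r * sin t) n) = 2 * PI * frac_part (INR n * (t / (2 * PI))).
Proof.
intros Hr. pose proof PI_RGT_0.
set (u := INR n * (t / (2 * PI))).
assert (Ht : INR n * t = 2 * PI * frac_part u + 2 * PI * IZR (Int_part u))
  by (unfold frac_part, u; field; lra).
destruct (cos_sin_add_2PI_mult (2 * PI * frac_part u) (Int_part u)) as [Hc Hs].
rewrite Cpow_polar, Ht, Hc, Hs.
apply arg_polar; [now apply pow_lt |].
pose proof (base_fp u). split; nra.
Qed.

Definition irrational (al : R) : Prop :=
  forall (n : nat) (m : Z), (1 <= n)%nat -> INR n * al <> IZR m.

Lemma pigeonhole (N : nat) (g : nat -> nat) :
  (forall i, (i <= N)%nat -> (g i < N)%nat) -> exists i j, (i < j <= N)%nat /\ g i = g j.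
Proof.
revert g. induction N as [|N IH]; intros g Hg.
- specialize (Hg 0%nat (le_n 0)). lia.
- destruct (classic (exists i, (i <= N)%nat /\ g i = g (S N))) as [[i [Hi E]] | Hnew].
  { exists i, (S N). split; [lia | exact E]. }
  (* Otherwise the value g (S N) < N is free on [0, N]: redirect the value N to it. *)
  set (g' := fun i => if Nat.eqb (g i) N then g (S N) else g i).
  destruct (IH g') as [i [j [Hij E]]].
  { intros i Hi. unfold g'. pose proof (Hg (S N) (le_n _)).
    destruct (Nat.eqb_spec (g i) N) as [e | e].
    - assert (g (S N) <> N) by (intro; apply Hnew; exists i; split; [lia | congruence]). lia.
    - specialize (Hg i ltac:(lia)). lia. }
  unfold g' in E. exists i, j. split; [lia |].
  destruct (Nat.eqb_spec (g i) N), (Nat.eqb_spec (g j) N);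
    [congruence | exfalso; apply Hnew; exists j | exfalso; apply Hnew; exists i | exact E];
    split; lia || congruence.
Qed.

Lemma Int_part_scaled_range (N : nat) (r : R) : (0 < N)%nat -> 0 <= r < 1 ->
  (0 <= Int_part (INR N * r) < Z.of_nat N)%Z.
Proof.
intros HN Hr. apply lt_0_INR in HN. destruct (base_Int_part (INR N * r)).
split.
- apply Z.lt_pred_le, lt_IZR. simpl. nra.
- apply lt_IZR. rewrite <- INR_IZR_INZ. nra.
Qed.

Lemma Int_part_eq_close (u v : R) : Int_part u = Int_part v -> Rabs (u - v) < 1.
Proof.
intros E. destruct (base_Int_part u), (base_Int_part v).
rewrite E in *. apply Rabs_def1; lra.
Qed.

Lemma dirichlet_approximation (al delta : R) : irrational al -> 0 < delta ->
  exists (d : nat) (m : Z), (1 <= d)%nat /\ 0 < Rabs (INR d * al - IZR m) < delta.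
Proof.
intros Hal Hdelta.
destruct (archimed_cor1 delta Hdelta) as [N [HN HN0]].
assert (HNpos : 0 < INR N) by (apply lt_0_INR; lia).
assert (Hcell : forall i, (0 <= Int_part (INR N * frac_part (INR i * al)) < Z.of_nat N)%Z).
{ intros i. apply Int_part_scaled_range; [exact HN0 |]. destruct (base_fp (INR i * al)). lra. }
destruct (pigeonhole N (fun i => Z.to_nat (Int_part (INR N * frac_part (INR i * al)))))
  as [i [j [Hij Heq]]].
{ intros i _. specialize (Hcell i). lia. }
apply Z2Nat.inj in Heq; [| apply Hcell | apply Hcell].
exists (j - i)%nat, (Int_part (INR j * al) - Int_part (INR i * al))%Z.
split; [lia |].
assert (Ediff : INR (j - i) * al - IZR (Int_part (INR j * al) - Int_part (INR i * al))
                = frac_part (INR j * al) - frac_part (INR i * al))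
  by (rewrite minus_INR, minus_IZR by lia; unfold frac_part; ring).
rewrite Ediff. split.
- apply Rabs_pos_lt. rewrite <- Ediff. intro E.
  apply (Hal (j - i)%nat (Int_part (INR j * al) - Int_part (INR i * al))%Z); [lia | lra].
- apply Int_part_eq_close in Heq.
  rewrite <- Rmult_minus_distr_l, Rabs_mult, Rabs_pos_eq in Heq by lra.
  apply Rlt_trans with (/ INR N); [| exact HN].
  apply Rmult_lt_reg_l with (INR N); [lra |]. rewrite Rinv_r by lra.
  rewrite Rabs_minus_sym. exact Heq.
Qed.

Lemma multiple_near (s y : R) : 0 < s -> 0 <= y ->
  exists k : nat, (1 <= k)%nat /\ 0 < INR k * s <= Rmax y s /\ Rabs (INR k * s - y) <= s.
Proof.
intros Hs Hy.
destruct (Rlt_or_le y s) as [Hys | Hys].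
- exists 1%nat. rewrite Rmult_1_l. split; [lia |]. split.
  + split; [lra | apply Rmax_r].
  + rewrite Rabs_pos_eq; lra.
- set (q := y / s). assert (Hyq : y = q * s) by (unfold q; field; lra).
  destruct (base_Int_part q) as [HK1 HK2].
  assert (HK : (1 <= Int_part q)%Z) by (apply Z.lt_pred_le, lt_IZR; simpl; nra).
  exists (Z.to_nat (Int_part q)).
  rewrite INR_IZR_INZ, Z2Nat.id by lia.
  pose proof (IZR_le _ _ HK). pose proof (Rmax_l y s).
  split; [lia |]. split; [split; nra |].
  rewrite Rabs_left1; nra.
Qed.

Lemma frac_part_dense (al : R) : irrational al ->
  forall y eps : R, 0 <= y <= 1 -> 0 < eps ->
  exists n : nat, (1 <= n)%nat /\ Rabs (frac_part (INR n * al) - y) < eps.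
Proof.
intros Hal y eps Hy Heps.
destruct (dirichlet_approximation al (Rmin eps 1) Hal) as [d [m [Hd [Ht0 Ht]]]].
{ apply Rmin_glb_lt; lra. }
pose proof (Rmin_l eps 1). pose proof (Rmin_r eps 1).
set (t := INR d * al - IZR m) in *.
assert (Hmult : forall k : nat, INR (k * d) * al = INR k * t + IZR (Z.of_nat k * m))
  by (intros k; unfold t; rewrite mult_INR, mult_IZR, <- INR_IZR_INZ; ring).
destruct (Rle_or_lt 0 t) as [Htpos | Htneg].
- rewrite Rabs_pos_eq in Ht0, Ht by lra.
  destruct (multiple_near t y Ht0 (proj1 Hy)) as [k [Hk [[Hk0 Hk1] Hclose]]].
  exists (k * d)%nat. split; [nia |].
  assert (Hlt1 : INR k * t < 1).
  { assert (INR k * t <= 1) by (pose proof (Rmax_lub y t 1); lra).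
    destruct (Rle_lt_or_eq_dec _ _ H1) as [| E]; [assumption | exfalso].
    apply (Hal (k * d)%nat (Z.of_nat k * m + 1)%Z); [nia |].
    rewrite Hmult, E, plus_IZR. ring. }
  destruct (Int_part_frac_part_spec (INR (k * d) * al) (Z.of_nat k * m) (INR k * t))
    as [_ <-]; [lra | rewrite Hmult; ring |].
  lra.
- rewrite Rabs_left in Ht0, Ht by lra.
  destruct (multiple_near (- t) (1 - y) Ht0 ltac:(lra)) as [k [Hk [[Hk0 Hk1] Hclose]]].
  exists (k * d)%nat. split; [nia |].
  pose proof (Rmax_lub (1 - y) (- t) 1).
  destruct (Int_part_frac_part_spec (INR (k * d) * al) (Z.of_nat k * m - 1)
              (1 - INR k * - t)) as [_ <-]; [lra | rewrite Hmult, minus_IZR; ring |].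
  replace (1 - INR k * - t - y) with (- (INR k * - t - (1 - y))) by ring.
  rewrite Rabs_Ropp. lra.
Qed.

Lemma arg_pow_dense (z : C) : z <> 0%C ->
  (forall n : nat, (1 <= n)%nat -> Im (z ^ n)%C <> 0) ->
  forall x eps : R, 0 <= x <= 2 * PI -> 0 < eps ->
  exists n : nat, (1 <= n)%nat /\ Rabs (arg (z ^ n)%C - x) < eps.
Proof.
intros Hz Hnreal x eps Hx Heps. pose proof PI_RGT_0.
assert (Hr : 0 < Cmod z) by now apply Cmod_gt_0.
destruct (polar_form z Hz) as [t Ht].
assert (Hirr : irrational (t / (2 * PI))).
{ intros n m Hn E. apply (Hnreal n Hn). rewrite Ht, Cpow_polar. simpl.
  rewrite sin_eq_0_1; [ring |]. exists (2 * m)%Z.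
  rewrite mult_IZR, <- E. field. lra. }
assert (Hxs : x = 2 * PI * (x / (2 * PI))) by (field; lra).
assert (Hes : eps = 2 * PI * (eps / (2 * PI))) by (field; lra).
destruct (frac_part_dense _ Hirr (x / (2 * PI)) (eps / (2 * PI))) as [n [Hn Hclose]];
  [split; nra | nra |].
exists n. split; [exact Hn |].
rewrite Ht, arg_Cpow_polar by exact Hr.
rewrite Hxs, <- Rmult_minus_distr_l, Rabs_mult, Rabs_pos_eq by lra.
rewrite Hes. apply Rmult_lt_compat_l; lra.
Qed.

Theorem lemma14p1 (mu : C) :
  (mu ^ 3 - mu - 2)%C = RtoC 0 -> Im mu <> 0 ->
  (forall n : nat, (1 <= n)%nat -> Im (mu ^ n)%C <> 0) /\
  (forall x eps : R, 0 <= x <= 2 * PI -> 0 < eps ->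
     exists n : nat, (1 <= n)%nat /\ Rabs (arg (mu ^ n)%C - x) < eps).
Proof.
intros Hroot Him.
pose proof (cubic_root_pow_not_real mu Hroot Him) as Hnreal.
split; [exact Hnreal |].
apply arg_pow_dense; [| exact Hnreal].
intros ->. apply Him. reflexivity.
Qed.
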